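(* Let $A$ be a cyclic Leibniz algebra generated by $a$, with notation $L_a$, $p(x)=p_1(x)^{n_1}\cdots p_s(x)^{n_s}$ as in the context. Then the Frattini subalgebra of $A$ is $$\Phi(A)=\{b\in A : q(L_a)(b)=0\},\qquad q(x)=p_1(x)^{n_1-1}\cdots p_s(x)^{n_s-1}.$$
   Context: A (left) Leibniz algebra is an algebra satisfying $x(yz)=(xy)z+y(xz)$ for all $x,y,z$; all algebras are finite-dimensional over a field $F$. $A$ is a cyclic Leibniz algebra generated by $a$: $A$ is generated as an algebra by the single element $a$, and with $a^1=a$, $a^{k+1}=aa^k$, the elements $a,a^2,\dots,a^n$ form a basis of $A$ ($n=\dim A$). Write $aa^n=\alpha_2a^2+\cdots+\alpha_na^n$ (the coefficient of $a$ is necessarily $0$). $L_a:A\to A$ denotes left multiplication $b\mapsto ab$; its matrix in this basis is the companion matrix of $p(x)=x^n-\alpha_nx^{n-1}-\cdots-\alpha_2x$. Factor $p(x)=p_1(x)^{n_1}\cdots p_s(x)^{n_s}$ with $p_1,\dots,p_s$ the distinct monic irreducible factors over $F$, and $p_1(x)=x$. The Frattini subalgebra $\Phi(A)$ is the intersection of all maximal subalgebras of $A$. *)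

From HB Require Import structures.
From mathcomp Require Import all_boot all_order all_algebra.
Set Implicit Arguments. Unset Strict Implicit. Unset Printing Implicit Defensive.
Import GRing.Theory.
Local Open Scope ring_scope.

(* An algebra structure on a finite-dimensional F-vector space A is given by a
   multiplication mul : A -> A -> A; bilinearity is a hypothesis of the theorem. *)
Definition bilinear_mul (F : fieldType) (A : vectType F) (mul : A -> A -> A) :=
  (forall x y z (c : F), mul x (c *: y + z) = c *: mul x y + mul x z) /\
  (forall x y z (c : F), mul (c *: x + y) z = c *: mul x z + mul y z).

Definition left_leibniz (F : fieldType) (A : vectType F) (mul : A -> A -> A) :=
  forall x y z, mul x (mul y z) = mul (mul x y) z + mul y (mul x z).

Definition is_subalg (F : fieldType) (A : vectType F) (mul : A -> A -> A)
  (U : {vspace A}) := forall x y, x \in U -> y \in U -> mul x y \in U.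

Definition is_max_subalg (F : fieldType) (A : vectType F) (mul : A -> A -> A)
  (M : {vspace A}) :=
  [/\ is_subalg mul M, M != fullv &
      forall V : {vspace A}, is_subalg mul V -> (M <= V)%VS -> V = M \/ V = fullv].

(* b lies in the Frattini subalgebra: the intersection of all maximal subalgebras
   (the empty intersection being A) *)
Definition in_frattini (F : fieldType) (A : vectType F) (mul : A -> A -> A) (b : A) :=
  forall M : {vspace A}, is_max_subalg mul M -> b \in M.

Definition generated_by (F : fieldType) (A : vectType F) (mul : A -> A -> A) (a : A) :=
  forall U : {vspace A}, is_subalg mul U -> a \in U -> U = fullv.

(* left powers: lpow mul a k = a^k with a^1 = a, a^(k+1) = a a^k  (k >= 1) *)
Definition lpow (F : fieldType) (A : vectType F) (mul : A -> A -> A) (a : A) (k : nat) : A :=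
  iter k.-1 (mul a) a.

Definition peval (F : fieldType) (A : vectType F) (q : {poly F}) (f : A -> A) (b : A) : A :=
  \sum_(i < size q) q`_i *: iter i f b.

From HB Require Import structures.
From mathcomp Require Import all_boot all_order all_algebra.
From Stdlib Require Import Classical.
Set Implicit Arguments. Unset Strict Implicit. Unset Printing Implicit Defensive.
Import GRing.Theory.
Local Open Scope ring_scope.

(* Write L for the left multiplication L_a and g(L) for 'peval g L'.  Since
   a, L a, ..., L^(n-1) a is a basis and p(L) a = 0, the map g |-> g(L) a
   identifies A with F[x]/(p) as an F[x]-module ('peval_surj',
   'peval_a_eq0').  The left Leibniz identity shows that g(L) a acts on the
   left as g(0) L ('mul_peval_a'), so a subalgebra is either L-invariant or
   consists of left annihilators; from this the maximal subalgebras are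
   exactly the maximal L-invariant subspaces ('frattiniP').
   For an irreducible factor r of p, r(L) A is a maximal invariant subspace
   ('max_invariant_factor'), so g(L) a in the Frattini subalgebra forces every
   p_i, hence their product, to divide g.  Conversely, if prod p_i divides g
   then g is nilpotent modulo p, and such elements lie in every maximal
   invariant subspace ('nilpotent_in_max_invariant').  The theorem follows
   since q(L) (g(L) a) = 0 iff p = q * prod p_i divides q g, i.e. iff
   prod p_i divides g ('peval_kernel_factor'). *)

(* A function satisfying the linearity equation, packaged as a linear map so
   that the library's lemmas about linear maps apply to it. *)
Definition linear_of (R : pzRingType) (U V : lmodType R) (f : U -> V)
  (f_lin : linear f) : {linear U -> V} :=
  HB.pack f (GRing.isLinear.Build R U V *:%R f f_lin).

Section PolynomialEvaluation.
Variables (F : fieldType) (A : vectType F) (f : A -> A).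
Hypothesis f_lin : linear f.

Let fL : {linear A -> A} := linear_of f_lin.

Lemma iter_linear k : linear (iter k f).
Proof. by elim: k => [|k IH] c x y //=; rewrite IH f_lin. Qed.

Lemma peval_wide N (g : {poly F}) v : (size g <= N)%N ->
  peval g f v = \sum_(i < N) g`_i *: iter i f v.
Proof.
move=> le_gN; rewrite /peval (big_ord_widen _ (fun i => g`_i *: iter i f v) le_gN).
rewrite big_mkcond /=; apply: eq_bigr => i _; case: ltnP => // le_gi.
by rewrite nth_default // scale0r.
Qed.

Lemma peval0 v : peval 0 f v = 0.
Proof. by rewrite /peval size_poly0 big_ord0. Qed.

Lemma pevalD g h v : peval (g + h) f v = peval g f v + peval h f v.
Proof.
rewrite !(@peval_wide (maxn (size g) (size h))) ?leq_maxl ?leq_maxr ?size_polyD //.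
by rewrite -big_split /=; apply: eq_bigr => i _; rewrite coefD scalerDl.
Qed.

Lemma pevalZ c g v : peval (c *: g) f v = c *: peval g f v.
Proof.
rewrite !(@peval_wide (size g)) ?size_scale_leq // scaler_sumr.
by apply: eq_bigr => i _; rewrite coefZ scalerA.
Qed.

Lemma pevalB g h v : peval (g - h) f v = peval g f v - peval h f v.
Proof. by rewrite pevalD -scaleN1r pevalZ scaleN1r. Qed.

Lemma pevalC c v : peval c%:P f v = c *: v.
Proof. by rewrite (@peval_wide 1) ?size_polyC_leq1 // big_ord1 coefC. Qed.

Lemma peval1 v : peval 1 f v = v.
Proof. by rewrite pevalC scale1r. Qed.

Lemma pevalMX g v : peval (g * 'X) f v = peval g f (f v).
Proof.
rewrite (@peval_wide (size g).+1); last first.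
  by rewrite (leq_trans (size_polyMleq _ _)) // size_polyX addn2.
rewrite (@peval_wide (size g)) // big_ord_recl coefMX eqxx scale0r add0r.
by apply: eq_bigr => i _; rewrite coefMX /= -iterS iterSr.
Qed.

Lemma peval_linear g : linear (peval g f).
Proof.
move=> c x y; rewrite !(@peval_wide (size g)) // scaler_sumr -big_split /=.
apply: eq_bigr => i _; rewrite (iter_linear i) scalerDr !scalerA.
by rewrite mulrC.
Qed.

Lemma peval_comm g v : f (peval g f v) = peval g f (f v).
Proof.
have f_sum := big_morph f (linearD fL) (linear0 fL).
rewrite !(@peval_wide (size g)) // f_sum; apply: eq_bigr => i _.
by rewrite -[f _]/(fL _) linearZ -iterS iterSr.
Qed.

Lemma peval_vec0 g : peval g f 0 = 0.
Proof. exact: (linear0 (linear_of (peval_linear g))). Qed.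

Lemma pevalM g h v : peval (g * h) f v = peval g f (peval h f v).
Proof.
elim/poly_ind: g v => [|g c IH] v; first by rewrite mul0r !peval0.
rewrite mulrDl -mulrA (mulrC 'X) mulrA pevalD pevalMX IH mul_polyC pevalZ.
by rewrite pevalD pevalMX pevalC peval_comm.
Qed.

Lemma pevalXn k v : peval 'X^k f v = iter k f v.
Proof.
elim: k v => [|k IH] v; first by rewrite expr0 peval1.
by rewrite exprSr pevalMX IH iterSr.
Qed.

Lemma peval_sum I (r : seq I) (P : pred I) (G : I -> {poly F}) v :
  peval (\sum_(i <- r | P i) G i) f v = \sum_(i <- r | P i) peval (G i) f v.
Proof. exact: (big_morph (fun g => peval g f v) (fun g h => pevalD g h v) (peval0 v)). Qed.

Lemma peval_stable (U : {vspace A}) g v :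
  (forall x, x \in U -> f x \in U) -> v \in U -> peval g f v \in U.
Proof.
move=> fU; elim/poly_ind: g v => [|g c IH] v vU; first by rewrite peval0 mem0v.
by rewrite pevalD pevalMX pevalC memvD ?memvZ // IH // fU.
Qed.

End PolynomialEvaluation.

Lemma irreducible_coprime (F : fieldType) (r h : {poly F}) :
  irreducible_poly r -> ~~ (r %| h) -> coprimep r h.
Proof.
move=> r_irr r_ndvd_h; rewrite coprimep_def; apply: contraR r_ndvd_h => gcd_n1.
by rewrite -(eqp_dvdl _ (r_irr _ gcd_n1 (dvdp_gcdl r h))) dvdp_gcdr.
Qed.

Lemma monic_irreducible_coprime (F : fieldType) (r1 r2 : {poly F}) :
  r1 \is monic -> r2 \is monic -> irreducible_poly r1 -> irreducible_poly r2 ->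
  r1 != r2 -> coprimep r1 r2.
Proof.
move=> r1_monic r2_monic r1_irr r2_irr; apply: contraR => not_coprime.
have r1_dvd_r2 : r1 %| r2 by apply: contraR not_coprime; apply: irreducible_coprime.
have size_r1 : size r1 != 1%N by rewrite neq_ltn r1_irr.1 orbT.
by rewrite -eqp_monic // r2_irr.
Qed.

Lemma dvdp_prod_coprime (F : fieldType) (I : finType) (P : I -> {poly F})
  (g : {poly F}) :
  (forall i j, i != j -> coprimep (P i) (P j)) -> (forall i, P i %| g) ->
  \prod_i P i %| g.
Proof.
move=> P_coprime P_dvd; rewrite -big_enum /=.
elim: (enum I) (enum_uniq I) => [|j r IH] /=; first by rewrite big_nil dvd1p.
case/andP=> j_notin_r r_uniq; rewrite big_cons Gauss_dvdp ?P_dvd ?IH //.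
rewrite big_seq; apply: (big_ind (coprimep (P j))) => [|x y|i i_in_r]; first exact: coprimep1.
  by rewrite coprimepMr => ->.
by apply: P_coprime; apply: contraNneq j_notin_r => ->.
Qed.

Section CyclicLeibniz.
Variables (F : fieldType) (A : vectType F) (mul : A -> A -> A) (a : A).
Hypothesis mul_bilinear : bilinear_mul mul.
Hypothesis mul_leibniz : left_leibniz mul.

Local Notation L := (mul a).

Lemma L_linear : linear L.
Proof. by move=> c x y; rewrite (proj1 mul_bilinear). Qed.

Lemma mulr_linear z : linear (mul^~ z).
Proof. by move=> c x y; rewrite (proj2 mul_bilinear). Qed.

Lemma mul0l z : mul 0 z = 0.
Proof. exact: (linear0 (linear_of (mulr_linear z))). Qed.

Lemma mulDl x y z : mul (x + y) z = mul x z + mul y z.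
Proof. exact: (linearD (linear_of (mulr_linear z))). Qed.

Lemma mulZl c x z : mul (c *: x) z = c *: mul x z.
Proof. exact: (linearZ_LR (linear_of (mulr_linear z))). Qed.

Lemma L0 : L 0 = 0.
Proof. exact: (linear0 (linear_of L_linear)). Qed.

Lemma LD x y : L (x + y) = L x + L y.
Proof. exact: (linearD (linear_of L_linear)). Qed.

Lemma LZ c x : L (c *: x) = c *: L x.
Proof. exact: (linearZ_LR (linear_of L_linear)). Qed.

Lemma mul_L x y : mul (L x) y = L (mul x y) - mul x (L y).
Proof. by rewrite mul_leibniz addrK. Qed.

(* The element g(L_a) a acts on the left as g(0) L_a: all the left powers a^k,
   k >= 2, are left annihilators. *)
Lemma mul_peval_a g y : mul (peval g L a) y = g`_0 *: L y.
Proof.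
elim/poly_ind: g y => [|g c IH] y; first by rewrite peval0 coef0 scale0r mul0l.
rewrite pevalD pevalMX pevalC -peval_comm; last exact: L_linear.
rewrite mulDl mulZl mul_L IH LZ -IH subrr add0r.
by rewrite coefD coefMX coefC add0r.
Qed.

Definition lannih x := forall y, mul x y = 0.

Definition invariant (U : {vspace A}) := forall v, v \in U -> L v \in U.

Lemma lannihD x y : lannih x -> lannih y -> lannih (x + y).
Proof. by move=> x0 y0 z; rewrite mulDl x0 y0 addr0. Qed.

Lemma lannih_peval g x : lannih x -> lannih (peval g L x).
Proof.
elim/poly_ind: g x => [|g c IH] x x0 y; first by rewrite peval0 mul0l.
rewrite pevalD pevalMX pevalC mulDl mulZl x0 scaler0 addr0 IH // => z.
by rewrite mul_L !x0 L0 subrr.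
Qed.

Lemma lannih_invariant U : lannih a -> invariant U.
Proof. by move=> a0 v _; rewrite a0 mem0v. Qed.

Lemma invariantD U V : invariant U -> invariant V -> invariant (U + V)%VS.
Proof.
move=> U_inv V_inv _ /memv_addP[u uU [v vV ->]].
by rewrite LD memv_add ?U_inv ?V_inv.
Qed.

Let n := \dim (fullv : {vspace A}).
Hypothesis a_basis : basis_of fullv (mkseq (fun i => lpow mul a i.+1) n).

Lemma peval_charpoly_a (alpha : nat -> F) :
  mul a (lpow mul a n) = \sum_(1 <= i < n.+1) alpha i *: lpow mul a i ->
  peval ('X^n - \sum_(1 <= i < n.+1) (alpha i)%:P * 'X^(i.-1)) L a = 0.
Proof.
have [n0 _ | n_gt0 a_rel] := posnP n.
  (* for n = 0 the space A is trivial *)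
  have /eqP full0 : (fullv : {vspace A}) == 0%VS by rewrite -dimv_eq0 -/n n0.
  by apply/eqP; rewrite -memv0 -full0 memvf.
rewrite pevalB pevalXn peval_sum -(prednK n_gt0) iterS prednK // a_rel.
by apply/eqP; rewrite subr_eq0; apply/eqP/eq_bigr => i _; rewrite mul_polyC pevalZ pevalXn.
Qed.

Definition cyc w : {vspace A} := <<mkseq (fun i => iter i L w) n>>%VS.

Lemma mem_cyc_peval w v : v \in cyc w -> exists g, v = peval g L w.
Proof.
move=> /(coord_span (X := in_tuple _)) ->; set X := mkseq _ _.
exists (\sum_(i < size X) coord (in_tuple X) i v *: 'X^i).
rewrite peval_sum; apply: eq_bigr => i _.
have lt_in : (i < n)%N by rewrite -[n](size_mkseq (fun i => iter i L w)) ltn_ord.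
by rewrite pevalZ pevalXn /= /X nth_mkseq.
Qed.

Lemma peval_surj v : exists g, v = peval g L a.
Proof. by apply: mem_cyc_peval; rewrite /cyc (span_basis a_basis) memvf. Qed.

Lemma peval_a_small (r : {poly F}) : (size r <= n)%N -> peval r L a = 0 -> r = 0.
Proof.
set X := mkseq (fun i => lpow mul a i.+1) n.
have size_X : size X = n by rewrite size_mkseq.
move=> size_r; rewrite (@peval_wide _ _ L (size X)) => [r_a|]; last by rewrite size_X.
have := (freeP (basis_free a_basis : free (in_tuple X))) (fun i => r`_i).
have -> : \sum_(i < size X) r`_i *: (in_tuple X)`_i =
          \sum_(i < size X) r`_i *: iter i L a.
  apply: eq_bigr => i _; have lt_in : (i < n)%N by rewrite -[n]size_X ltn_ord.
  by rewrite /= /X nth_mkseq.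
move=> /(_ r_a) r_coef0; apply/polyP => i; rewrite coef0.
have [lt_iX|] := ltnP i (size X); first exact: (r_coef0 (Ordinal lt_iX)).
by rewrite size_X => le_ni; rewrite nth_default // (leq_trans size_r).
Qed.

(* From here on p is a nonzero polynomial of degree at most n with p(L_a) a = 0;
   it will be the polynomial x^n - sum alpha_i x^(i-1) of the theorem. *)
Variable p : {poly F}.
Hypothesis p_a : peval p L a = 0.
Hypothesis p_neq0 : p != 0.
Hypothesis size_p : (size p <= n.+1)%N.

Lemma size_modp_p (g : {poly F}) : (size (g %% p)%R <= n)%N.
Proof. by rewrite -ltnS (leq_trans _ size_p) // ltn_modp. Qed.

Lemma peval_a_eq0 g : peval g L a = 0 <-> p %| g.
Proof.
split=> [g_a | /divpK <-]; last by rewrite (pevalM L_linear) p_a (peval_vec0 L_linear).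
apply/modp_eq0P/peval_a_small; first exact: size_modp_p.
move: g_a; rewrite {1}(divp_eq g p) pevalD (pevalM L_linear) p_a.
by rewrite (peval_vec0 L_linear) add0r.
Qed.

(* p(L_a) vanishes on all of A, since it commutes with every g(L_a) *)
Lemma peval_p w : peval p L w = 0.
Proof.
have [g ->] := peval_surj w.
by rewrite -(pevalM L_linear) mulrC (pevalM L_linear) p_a (peval_vec0 L_linear).
Qed.

Lemma cycP w v : v \in cyc w <-> exists g, v = peval g L w.
Proof.
split=> [|[g ->]]; first exact: mem_cyc_peval.
rewrite (divp_eq g p) pevalD (pevalM L_linear) peval_p (peval_vec0 L_linear) add0r.
rewrite (@peval_wide _ _ L n (g %% p)); last exact: size_modp_p.
apply: memv_suml => i _; apply/memvZ/memv_span.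
by apply: map_f; rewrite mem_iota ltn_ord.
Qed.

Lemma cyc_self w : w \in cyc w.
Proof. by apply/cycP; exists 1; rewrite peval1. Qed.

Lemma cyc_invariant w : invariant (cyc w).
Proof.
move=> _ /cycP[g ->]; apply/cycP; exists (g * 'X).
by rewrite pevalMX (peval_comm L_linear).
Qed.

Lemma invariant_full U : invariant U -> a \in U -> U = fullv.
Proof.
move=> U_inv aU; apply/vspaceP => v; rewrite memvf.
by have [g ->] := peval_surj v; apply: peval_stable.
Qed.

(* A subalgebra containing an element that does not annihilate is invariant:
   such an element acts as a nonzero multiple of L_a. *)
Lemma subalg_invariant U x :
  is_subalg mul U -> x \in U -> ~ lannih x -> invariant U.
Proof.
move=> U_sub xU x_nannih v vU; have [g x_def] := peval_surj x.
have g0_neq0 : g`_0 != 0.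
  by apply: contra_not_neq x_nannih => g0 y; rewrite x_def mul_peval_a g0 scale0r.
by rewrite -[L v](scalerK g0_neq0) memvZ // -mul_peval_a -x_def U_sub.
Qed.

(* invariant subspaces are subalgebras, since x y = g(0) L_a y *)
Lemma invariant_subalg U : invariant U -> is_subalg mul U.
Proof.
move=> U_inv x y _ yU; have [g ->] := peval_surj x.
by rewrite mul_peval_a memvZ // U_inv.
Qed.

Lemma subalg_invariant_or_lannih U :
  is_subalg mul U -> invariant U \/ (forall x, x \in U -> lannih x).
Proof.
move=> U_sub; have [[x [xU x_nannih]]|all_lannih] :=
  classic (exists x, x \in U /\ ~ lannih x).
  by left; apply: subalg_invariant x_nannih.
by right=> x xU; apply: NNPP => x_nannih; apply: all_lannih; exists x.
Qed.

Lemma lannih_add_cyc (M : {vspace A}) v : (forall x, x \in M -> lannih x) ->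
  lannih v -> forall x, x \in (M + cyc v)%VS -> lannih x.
Proof.
move=> M_lannih v_lannih _ /memv_addP[m mM [w /cycP[g ->] ->]].
by apply: lannihD; [apply: M_lannih | apply: lannih_peval].
Qed.

Definition max_invariant (M : {vspace A}) :=
  [/\ invariant M, M != fullv &
      forall V : {vspace A}, invariant V -> (M <= V)%VS -> V = M \/ V = fullv].

(* In both directions the delicate case
   is a space of left annihilators; it is settled by noting that if a itself
   annihilates then L_a = 0 and every subspace is invariant. *)
Lemma max_subalg_invariant M : is_max_subalg mul M -> max_invariant M.
Proof.
case=> M_sub M_proper M_max; split=> // [|V /invariant_subalg]; last exact: M_max.
have [a_lannih|a_nannih] := classic (lannih a); first exact: lannih_invariant.
case: (subalg_invariant_or_lannih M_sub) => // M_lannih m mM.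
have W_lannih := lannih_add_cyc M_lannih (M_lannih m mM).
have W_sub : is_subalg mul (M + cyc m)%VS.
  by move=> x y xW _; rewrite W_lannih // mem0v.
case: (M_max _ W_sub (addvSl _ _)) => [<-|W_full].
  by rewrite (subvP (addvSr _ _)) // cyc_invariant ?cyc_self.
by case: a_nannih; apply: W_lannih; rewrite W_full memvf.
Qed.

Lemma max_invariant_subalg M : max_invariant M -> is_max_subalg mul M.
Proof.
case=> M_inv M_proper M_max; split=> //; first exact: invariant_subalg.
move=> V V_sub MV.
have [a_lannih|a_nannih] := classic (lannih a).
  by apply: M_max MV; apply: lannih_invariant.
case: (subalg_invariant_or_lannih V_sub) => [V_inv|V_lannih]; first exact: M_max.
left; apply/eqP; rewrite eqEsubv MV andbT; apply/subvP => v vV.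
have M_lannih x : x \in M -> lannih x by move=> xM; apply/V_lannih/(subvP MV).
case: (M_max _ (invariantD M_inv (cyc_invariant (w := v))) (addvSl _ _)) => [<-|W_full].
  by rewrite (subvP (addvSr _ _)) ?cyc_self.
by case: a_nannih; apply: (lannih_add_cyc M_lannih (V_lannih v vV)); rewrite W_full memvf.
Qed.

Lemma frattiniP b : in_frattini mul b <-> forall M, max_invariant M -> b \in M.
Proof.
split=> b_in M M_max; first exact/b_in/max_invariant_subalg.
exact/b_in/max_subalg_invariant.
Qed.

Lemma mem_cyc_factor r g :
  r %| p -> peval g L a \in cyc (peval r L a) <-> r %| g.
Proof.
move=> r_dvd_p; split=> [/cycP[h] | /divpK <-]; last first.
  by apply/cycP; exists (g %/ r); rewrite (pevalM L_linear).
rewrite -(pevalM L_linear) => /eqP; rewrite -subr_eq0 -pevalB => /eqP.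
by move=> /peval_a_eq0/(dvdp_trans r_dvd_p); rewrite dvdp_subl // dvdp_mull.
Qed.

Lemma max_invariant_factor r :
  r %| p -> irreducible_poly r -> max_invariant (cyc (peval r L a)).
Proof.
move=> r_dvd_p r_irr; split; first exact: cyc_invariant.
  apply/eqP => cyc_full; have := memvf (peval 1 L a).
  rewrite -cyc_full (mem_cyc_factor _ r_dvd_p) dvdp1 => /eqP r_size1.
  by have := r_irr.1; rewrite r_size1.
move=> V V_inv cyc_V.
have [[v vV v_out]|V_in] :=
  classic (exists2 v, v \in V & v \notin cyc (peval r L a)); last first.
  left; apply/eqP; rewrite eqEsubv cyc_V andbT; apply/subvP => v vV.
  by apply: contraT => v_out; case: V_in; exists v.
right; apply: (invariant_full V_inv); have [h v_def] := peval_surj v.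
have r_ndvd_h : ~~ (r %| h).
  by apply: contra v_out; rewrite v_def => /(mem_cyc_factor _ r_dvd_p).
have /Bezout_eq1_coprimepP[[u1 u2] /= bezout] := irreducible_coprime r_irr r_ndvd_h.
rewrite -[a](peval1 L) -bezout pevalD !(pevalM L_linear) -v_def memvD //.
  by apply/(subvP cyc_V)/cycP; exists u1.
exact: peval_stable _ V_inv vV.
Qed.

(* If g is nilpotent modulo p, then g(L_a) a lies in every maximal invariant
   subspace M: otherwise M + <g(L_a) a> = A writes a = m + (u g)(L_a) a, and
   1 - (u g)^K, a multiple of 1 - u g, would bring a into M. *)
Lemma nilpotent_in_max_invariant g K M :
  p %| g ^+ K -> max_invariant M -> peval g L a \in M.
Proof.
move=> p_dvd_gK [M_inv M_proper M_max]; apply: contraT => b_out.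
have [W_eq|W_full] :=
  M_max _ (invariantD M_inv (cyc_invariant (w := peval g L a))) (addvSl _ _).
  by move: b_out; rewrite -W_eq (subvP (addvSr _ _)) ?cyc_self.
have := memvf a; rewrite -W_full => /memv_addP[m mM [_ /cycP[u ->] a_def]].
have h_a : peval (1 - u * g) L a \in M.
  by rewrite pevalB (peval1 L) (pevalM L_linear) {1}a_def addrK.
have hK_a : peval ((u * g) ^+ K) L a = 0.
  by apply/peval_a_eq0; rewrite exprMn dvdp_mull.
have : peval (1 - (u * g) ^+ K) L a \in M.
  rewrite -(expr1n _ K) subrXX mulrC (pevalM L_linear).
  exact: peval_stable _ M_inv h_a.
rewrite pevalB (peval1 L) hK_a subr0 => aM.
by rewrite (invariant_full M_inv aM) eqxx in M_proper.
Qed.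

Lemma frattini_radical s (ps : 'I_s -> {poly F}) (ns : 'I_s -> nat) :
  (forall i, ps i \is monic) -> (forall i, irreducible_poly (ps i)) ->
  injective ps -> (forall i, (0 < ns i)%N) -> p = \prod_(i < s) ps i ^+ ns i ->
  forall g, in_frattini mul (peval g L a) <-> \prod_(i < s) ps i %| g.
Proof.
move=> ps_monic ps_irr ps_inj ns_gt0 p_def g.
have ps_dvd_p i : ps i %| p.
  by rewrite p_def (bigD1 i) //= dvdp_mulr // dvdp_exp.
rewrite frattiniP; split=> [g_frat | rad_dvd_g M M_max].
  apply: dvdp_prod_coprime => [i j|i].
    by rewrite -(inj_eq ps_inj); apply: monic_irreducible_coprime.
  exact/(mem_cyc_factor _ (ps_dvd_p i))/g_frat/max_invariant_factor.
apply: (@nilpotent_in_max_invariant _ (\max_(i < s) ns i)) M_max.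
apply: dvdp_trans (dvdp_exp2r _ rad_dvd_g); rewrite p_def -prodrXl.
apply: (big_ind2 (fun x y => x %| y)) => [|x1 x2 y1 y2|i _]; first exact: dvdpp.
  exact: dvdp_mul.
by apply: dvdp_exp2l; apply: leq_bigmax.
Qed.

Lemma peval_kernel_factor q r g :
  p = q * r -> q != 0 -> peval q L (peval g L a) = 0 <-> r %| g.
Proof.
by move=> p_def q_neq0; rewrite -(pevalM L_linear) peval_a_eq0 p_def dvdp_mul2l.
Qed.

End CyclicLeibniz.

Lemma size_charpoly (F : fieldType) (n : nat) (alpha : nat -> F) :
  (size ('X^n - \sum_(1 <= i < n.+1) (alpha i)%:P * 'X^(i.-1))%R <= n.+1)%N.
Proof.
rewrite (leq_trans (size_polyD _ _)) // size_polyN geq_max size_polyXn leqnn /=.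
rewrite big_nat; apply: (big_ind (fun x : {poly F} => size x <= n.+1)%N).
- by rewrite size_poly0.
- by move=> x y x_le y_le; rewrite (leq_trans (size_polyD _ _)) // geq_max x_le.
move=> i /andP[_ lt_in]; rewrite mul_polyC (leq_trans (size_scale_leq _ _)) //.
by rewrite size_polyXn ltnS (leq_trans (leq_pred i)).
Qed.

Theorem mainTheorem7 (F : fieldType) (A : vectType F) (mul : A -> A -> A) (a : A)
  (alpha : nat -> F) (s : nat) (ps : 'I_s -> {poly F}) (ns : 'I_s -> nat) :
  bilinear_mul mul ->
  left_leibniz mul ->
  generated_by mul a ->
  basis_of fullv (mkseq (fun i => lpow mul a i.+1) (\dim (fullv : {vspace A}))) ->
  let n := \dim (fullv : {vspace A}) in
  mul a (lpow mul a n) = \sum_(1 <= i < n.+1) alpha i *: lpow mul a i ->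
  let p := 'X^n - \sum_(1 <= i < n.+1) (alpha i)%:P * 'X^(i.-1) in
  (forall i, ps i \is monic) ->
  (forall i, irreducible_poly (ps i)) ->
  injective ps ->
  (forall i, (0 < ns i)%N) ->
  p = \prod_(i < s) ps i ^+ ns i ->
  let q := \prod_(i < s) ps i ^+ (ns i).-1 in
  forall b : A, in_frattini mul b <-> peval q (mul a) b = 0.
Proof.
move=> mul_bil mul_leib _ a_basis n a_rel p ps_monic ps_irr ps_inj ns_gt0 p_def q b.
have p_a : peval p (mul a) a = 0 by apply: peval_charpoly_a.
have q_monic : q \is monic by apply: monic_prod => i _; apply: monic_exp.
have p_neq0 : p != 0.
  by rewrite p_def; apply/monic_neq0/monic_prod => i _; apply: monic_exp.
have p_qr : p = q * \prod_(i < s) ps i.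
  by rewrite p_def -big_split /=; apply: eq_bigr => i _; rewrite -exprSr prednK.
have [g ->] := peval_surj a_basis b.
have size_p := size_charpoly n alpha.
rewrite (frattini_radical mul_bil mul_leib a_basis p_a p_neq0 size_p) //.
by rewrite (peval_kernel_factor mul_bil a_basis p_a p_neq0 size_p _ p_qr (monic_neq0 q_monic)).
Qed.
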